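(* Let $A$ be a complete filtered associative algebra over a field $\mathbb{K}$ of characteristic zero, and let $P:A\to A$ be a linear map preserving the filtration, i.e. $P(A_n)\subseteq A_n$ for all $n$. Put $\tilde P:=\mathrm{id}_A-P$. Then there exists a unique (in general non-linear) map $\chi:A_1\to A_1$ such that $(\chi-\mathrm{id}_A)(A_i)\subseteq A_{2i}$ for every $i\ge 1$ and $$\forall a\in A_1:\quad a=C\big(P(\chi(a)),\,\tilde P(\chi(a))\big).$$ Moreover $\chi$ is bijective, and its inverse is $$\chi^{-1}(a)=C\big(P(a),\tilde P(a)\big)=a+\mathrm{BCH}\big(P(a),\tilde P(a)\big),\qquad a\in A_1.$$
   Context: A complete filtered associative algebra is an associative $\mathbb{K}$-algebra $A$ with a decreasing filtration $A=A_0\supseteq A_1\supseteq A_2\supseteq\cdots$ by subalgebras such that $A_mA_n\subseteq A_{m+n}$ and $A\cong\varprojlim A/A_n$. On $A_1$ the maps $\exp:A_1\to 1+A_1$, $\exp(a)=\sum_{n\ge0}a^n/n!$, and $\log:1+A_1\to A_1$, $\log(1+a)=-\sum_{n\ge1}(-a)^n/n$, are mutually inverse bijections. $\mathrm{BCH}(x,y)$ denotes the Baker--Campbell--Hausdorff series, i.e. the element of the free complete algebra $\mathbb{Q}\langle\langle x,y\rangle\rangle$ with $\exp(x)\exp(y)=\exp(x+y+\mathrm{BCH}(x,y))$; it is a series of iterated commutators $[u,v]=uv-vu$ beginning $\tfrac12[x,y]+\tfrac1{12}[x,[x,y]]-\tfrac1{12}[y,[x,y]]+\cdots$. For $u,v\in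 A_1$ put $C(u,v):=u+v+\mathrm{BCH}(u,v)=\log(\exp(u)\exp(v))\in A_1$. *)

From HB Require Import structures.
From mathcomp Require Import all_boot all_order all_algebra.
From Stdlib Require Import ClassicalEpsilon.
Set Implicit Arguments. Unset Strict Implicit. Unset Printing Implicit Defensive.
Import Order.TTheory GRing.Theory Num.Theory.
Local Open Scope ring_scope.

(* A complete filtered associative K-algebra structure on A, given by the
   decreasing filtration F 0 = A ⊇ F 1 ⊇ F 2 ⊇ ... of subspaces with
   F m * F n ⊆ F (m+n), Hausdorff (∩ F n = 0, injectivity of A -> lim A/A_n)
   and complete (every compatible family in lim A/A_n lifts to A). *)
Record complete_filtration (K : fieldType) (A : algType K)
    (F : nat -> A -> Prop) : Prop := {
  filt_top : forall a, F 0%N a;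
  filt_decr : forall n a, F n.+1 a -> F n a;
  filt_0 : forall n, F n 0;
  filt_add : forall n a b, F n a -> F n b -> F n (a + b);
  filt_scale : forall n (k : K) a, F n a -> F n (k *: a);
  filt_mul : forall m n a b, F m a -> F n b -> F (m + n)%N (a * b);
  filt_sep : forall a, (forall n, F n a) -> a = 0;
  filt_complete : forall x : nat -> A, (forall n, F n (x n.+1 - x n)) ->
      exists l, forall n, F n (l - x n)
}.

Definition series_to (A : zmodType) (F : nat -> A -> Prop) (f : nat -> A) (s : A) :=
  forall n, exists N, forall M, (N <= M)%N -> F n (s - \sum_(k < M) f k).

Definition fsum (A : zmodType) (F : nat -> A -> Prop) (f : nat -> A) : A :=
  epsilon (inhabits 0) (fun s => series_to F f s).

Definition fexp (K : fieldType) (A : algType K) (F : nat -> A -> Prop) (a : A) : A :=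
  fsum F (fun n => (n`!%:R : K)^-1 *: a ^+ n).

(* log (1 + a) = - sum_{n>=1} (-a)^n / n ; flog x is log of x = 1 + (x - 1) *)
Definition flog (K : fieldType) (A : algType K) (F : nat -> A -> Prop) (x : A) : A :=
  - fsum F (fun n => if n is 0%N then 0 else (n%:R : K)^-1 *: (- (x - 1)) ^+ n).

(* C(u, v) = log (exp u exp v) = u + v + BCH(u, v) *)
Definition fC (K : fieldType) (A : algType K) (F : nat -> A -> Prop) (u v : A) : A :=
  flog F (fexp F u * fexp F v).

From HB Require Import structures.
From mathcomp Require Import all_boot all_order all_algebra zify.
From Stdlib Require Import ClassicalEpsilon.
Set Implicit Arguments. Unset Strict Implicit. Unset Printing Implicit Defensive.
Import GRing.Theory.
Local Open Scope ring_scope.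

(* Let Phi a := C(P a, a - P a). Since exp x and log (1 + x) agree with 1 + x
   and x up to terms of degree >= 2, C(u, v) - (u + v) is quadratic: it maps
   A_i into A_2i and raises the filtration degree of differences on A_1 by one.
   Hence so is Phi - id, which makes Phi injective on A_1, and the iteration
   a_(n+1) = c - (Phi - id) a_n converges in the complete filtration to a
   preimage of c. So Phi is a bijection of A_1, chi is its inverse, and the
   uniqueness of chi is the injectivity of Phi. *)

Lemma subrACA (V : zmodType) (a b c d : V) : (a - b) - (c - d) = (a - c) - (b - d).
Proof. by rewrite !opprB addrACA [RHS]addrACA [- b + _]addrC. Qed.

Section CompleteFiltration.

Variables (K : fieldType) (A : algType K) (F : nat -> A -> Prop).
Hypothesis HF : complete_filtration F.

Lemma filt_le m n a : (n <= m)%N -> F m a -> F n a.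
Proof.
move=> /subnK <-; elim: (m - n)%N => //= d IH Fa; apply: IH.
by apply: (filt_decr HF); rewrite -addSn.
Qed.

Lemma filt_opp n a : F n a -> F n (- a).
Proof. by move=> Fa; rewrite -scaleN1r; apply: (filt_scale HF). Qed.

Lemma filt_sub n a b : F n a -> F n b -> F n (a - b).
Proof. by move=> Fa Fb; apply: (filt_add HF) => //; apply: filt_opp. Qed.

Lemma filt_sum n (I : Type) (r : seq I) (f : I -> A) :
  (forall i, F n (f i)) -> F n (\sum_(i <- r) f i).
Proof.
move=> Ff; elim: r => [|i r IH]; first by rewrite big_nil; apply: (filt_0 HF).
by rewrite big_cons; apply: (filt_add HF).
Qed.

Lemma filt_exp i x k : F i x -> F (k * i) (x ^+ k).
Proof.
move=> Fx; elim: k => [|k IH]; first by rewrite expr0; apply: (filt_top HF).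
by rewrite exprS mulSn; apply: (filt_mul HF).
Qed.

Lemma filt_expB j x y k : F 1 x -> F 1 y -> F j (x - y) ->
  F (j + k) (x ^+ k.+1 - y ^+ k.+1).
Proof.
move=> Fx Fy Fxy; elim: k => [|k IH]; first by rewrite addn0 !expr1.
have -> : x ^+ k.+2 - y ^+ k.+2 = x * (x ^+ k.+1 - y ^+ k.+1) + (x - y) * y ^+ k.+1.
  by rewrite mulrBr mulrBl addrA subrK -!exprS.
apply: (filt_add HF); first by rewrite addnS -add1n; apply: (filt_mul HF).
by apply: (filt_mul HF) => //; rewrite -{1}[k.+1]muln1; apply: filt_exp.
Qed.

Lemma filt_eq a b : (forall n, F n (a - b)) -> a = b.
Proof. by move=> Fab; apply/eqP; rewrite -subr_eq0; apply/eqP; apply: (filt_sep HF). Qed.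

Lemma series_to_unique f s t : series_to F f s -> series_to F f t -> s = t.
Proof.
move=> fs ft; apply: filt_eq => n.
have [[M fsM] [N ftN]] := (fs n, ft n); set S := \sum_(k < maxn M N) f k.
have -> : s - t = (s - S) - (t - S) by rewrite opprB addrA subrK.
by apply: filt_sub; [apply: fsM; rewrite leq_maxl | apply: ftN; rewrite leq_maxr].
Qed.

Lemma series_to_fsum f s : series_to F f s -> fsum F f = s.
Proof.
move=> fs; apply: (series_to_unique _ fs).
by apply: (epsilon_spec (inhabits 0) (series_to F f)); exists s.
Qed.

Lemma fsumP f : (forall n, F n (f n)) -> series_to F f (fsum F f).
Proof.
move=> Ff; pose S n := \sum_(k < n) f k.
have FS n d : F n (S (n + d)%N - S n).
  elim: d => [|d IH]; first by rewrite addn0 subrr; apply: (filt_0 HF).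
  rewrite /S addnS big_ord_recr /= addrAC; apply: (filt_add HF) => //.
  by apply: filt_le (Ff _); rewrite leq_addr.
have [l Fl] : exists l, forall n, F n (l - S n).
  apply: (filt_complete HF) => n; rewrite -addn1; exact: FS.
have fl : series_to F f l.
  move=> n; exists n => M /subnKC <-.
  rewrite -(subrKA (S n)) -opprB; apply: (filt_add HF); first by rewrite opprB.
  by rewrite -opprB; apply/filt_opp/FS.
by rewrite (series_to_fsum fl).
Qed.

Lemma series_toB f g s t : series_to F f s -> series_to F g t ->
  series_to F (fun k => f k - g k) (s - t).
Proof.
move=> fs gt n; have [[M fsM] [N gtN]] := (fs n, gt n).
exists (maxn M N) => L; rewrite geq_max => /andP[ML NL].
by rewrite sumrB subrACA; apply: filt_sub; [apply: fsM | apply: gtN].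
Qed.

Lemma series_to_filt n f s : (forall k, F n (f k)) -> series_to F f s -> F n s.
Proof.
move=> Ff fs; have [N fsN] := fs n.
rewrite -(subrK (\sum_(k < N) f k) s); apply: (filt_add HF); first exact: fsN.
by apply: filt_sum.
Qed.

Lemma series_to_shift f s :
  series_to F (fun k => f k.+1) s -> series_to F f (f 0%N + s).
Proof.
move=> fs n; have [N fsN] := fs n; exists N.+1 => -[//|M] NM.
by rewrite big_ord_recl /= opprD addrACA subrr add0r; apply: fsN.
Qed.

(* [filt_order m g]: on A_1, g behaves like a series of monomials of degree >= m. *)
Record filt_order (m : nat) (g : A -> A) : Prop := FiltOrder {
  filt_order_hom : forall i x, (0 < i)%N -> F i x -> F (m * i) (g x);
  filt_order_sub : forall j x y, F 1 x -> F 1 y -> F j (x - y) ->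
    F (j + m.-1) (g x - g y)
}.

Lemma eq_in_filt_order m g h :
  (forall x, F 1 x -> g x = h x) -> filt_order m g -> filt_order m h.
Proof.
move=> gh [gF gB]; split=> [i x i0 Fx | j x y Fx Fy Fxy].
  by rewrite -gh; [exact: gF | exact: filt_le Fx].
by rewrite -!gh //; apply: gB.
Qed.

Lemma filt_order_le m n g : (n <= m)%N -> filt_order m g -> filt_order n g.
Proof.
move=> nm [gF gB]; split=> [i x i0 Fx | j x y Fx Fy Fxy].
  by apply: filt_le (gF _ _ i0 Fx); rewrite leq_mul2r nm orbT.
by apply: filt_le (gB _ _ _ Fx Fy Fxy); lia.
Qed.

Lemma filt_order_id : filt_order 1 id.
Proof. by split=> [i x _ | j x y _ _]; rewrite ?mul1n ?addn0. Qed.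

Lemma filt_order_additive (P : {additive A -> A}) :
  (forall n a, F n a -> F n (P a)) -> filt_order 1 P.
Proof.
by move=> PF; split=> [i x _ | j x y _ _] Fx; rewrite ?mul1n ?addn0 -?raddfB; apply: PF.
Qed.

Lemma filt_orderD m g h : filt_order m g -> filt_order m h ->
  filt_order m (fun x => g x + h x).
Proof.
move=> [gF gB] [hF hB]; split=> [i x i0 Fx | j x y Fx Fy Fxy].
  by apply: (filt_add HF); [apply: gF | apply: hF].
by rewrite opprD addrACA; apply: (filt_add HF); [apply: gB | apply: hB].
Qed.

Lemma filt_orderN m g : filt_order m g -> filt_order m (fun x => - g x).
Proof.
move=> [gF gB]; split=> [i x i0 Fx | j x y Fx Fy Fxy]; first exact/filt_opp/gF.
by rewrite -opprD; apply/filt_opp/gB.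
Qed.

Lemma filt_orderM m n g h : (0 < m)%N -> (0 < n)%N ->
  filt_order m g -> filt_order n h -> filt_order (m + n) (fun x => g x * h x).
Proof.
move=> m0 n0 [gF gB] [hF hB]; split=> [i x i0 Fx | j x y Fx Fy Fxy].
  by rewrite mulnDl; apply: (filt_mul HF); [apply: gF | apply: hF].
have Fh1 z : F 1 z -> F n (h z) by move=> Fz; rewrite -[n]muln1; apply: hF.
have Fg1 z : F 1 z -> F m (g z) by move=> Fz; rewrite -[m]muln1; apply: gF.
rewrite -(subrKA (g y * h x)) -mulrBl -mulrBr.
apply: (filt_add HF).
  by apply: filt_le (filt_mul HF (gB _ _ _ Fx Fy Fxy) (Fh1 _ Fx)); lia.
by apply: filt_le (filt_mul HF (Fg1 _ Fy) (hB _ _ _ Fx Fy Fxy)); lia.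
Qed.

Lemma filt_order_comp m g h : filt_order m g -> filt_order 1 h -> filt_order m (g \o h).
Proof.
move=> [gF gB] [hF hB].
have Fh1 x : F 1 x -> F 1 (h x) by move=> Fx; rewrite -[1%N]muln1; apply: hF.
split=> [i x i0 Fx | j x y Fx Fy Fxy] /=.
  by apply: gF => //; rewrite -[i]mul1n; apply: hF.
by apply: gB; [exact: Fh1 | exact: Fh1 | have := hB _ _ _ Fx Fy Fxy; rewrite addn0].
Qed.

Definition pseries_tail (c : nat -> K) (x : A) : A :=
  fsum F (fun k => c k.+2 *: x ^+ k.+2).

Lemma pseries_tailP c x : F 1 x ->
  series_to F (fun k => c k.+2 *: x ^+ k.+2) (pseries_tail c x).
Proof.
move=> Fx; apply: fsumP => k; apply: (filt_scale HF).
by apply: filt_le (filt_exp k.+2 Fx); rewrite muln1 -addn2 leq_addr.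
Qed.

Lemma filt_order_pseries_tail c : filt_order 2 (pseries_tail c).
Proof.
split=> [i x i0 Fx | j x y Fx Fy Fxy].
  apply: series_to_filt (pseries_tailP c (filt_le i0 Fx)) => k.
  by apply: (filt_scale HF); apply: filt_le (filt_exp k.+2 Fx); rewrite leq_mul2r orbC.
apply: series_to_filt (series_toB (pseries_tailP c Fx) (pseries_tailP c Fy)) => k.
rewrite -scalerBr; apply: (filt_scale HF).
by apply: filt_le (filt_expB k.+1 Fx Fy Fxy); rewrite leq_add2l.
Qed.

Lemma fexpE u : F 1 u ->
  fexp F u = 1 + u + pseries_tail (fun n => (n`!%:R)^-1) u.
Proof.
move=> Fu; apply: series_to_fsum.
pose f n := (n`!%:R : K)^-1 *: u ^+ n.
have := pseries_tailP (fun n => (n`!%:R : K)^-1) Fu.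
move=> /(series_to_shift (f := fun k => f k.+1)) /series_to_shift.
by rewrite /f /= fact0 invr1 !scale1r expr0 expr1 addrA.
Qed.

Lemma flogE w : F 1 w ->
  flog F (1 + w) = w - pseries_tail (fun n => (n%:R)^-1) (- w).
Proof.
move=> Fw; rewrite /flog [1 + w]addrC addrK.
have Fnw : F 1 (- w) by apply: filt_opp.
pose f n := if n is 0%N then 0 else (n%:R : K)^-1 *: (- w) ^+ n.
have := pseries_tailP (fun n => (n%:R : K)^-1) Fnw.
move=> /(series_to_shift (f := fun k => f k.+1)) /series_to_shift /series_to_fsum ->.
by rewrite /f /= invr1 scale1r expr1 add0r opprD opprK.
Qed.

Lemma filt_order_bch g h : filt_order 1 g -> filt_order 1 h ->
  filt_order 2 (fun a => fC F (g a) (h a) - (g a + h a)).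
Proof.
move=> g1 h1.
pose E := pseries_tail (fun n => (n`!%:R : K)^-1).
pose L := pseries_tail (fun n => (n%:R : K)^-1).
(* exp (g a) = 1 + X a, exp (h a) = 1 + Y a and (1 + X a) (1 + Y a) = 1 + W a. *)
pose X a := g a + E (g a); pose Y a := h a + E (h a).
pose W a := X a + Y a + X a * Y a.
have E2 : filt_order 2 E := filt_order_pseries_tail _.
have L2 : filt_order 2 L := filt_order_pseries_tail _.
have Eg2 : filt_order 2 (E \o g) := filt_order_comp E2 g1.
have Eh2 : filt_order 2 (E \o h) := filt_order_comp E2 h1.
have X1 : filt_order 1 X := filt_orderD g1 (filt_order_le (leqnSn 1) Eg2).
have Y1 : filt_order 1 Y := filt_orderD h1 (filt_order_le (leqnSn 1) Eh2).
have XY2 : filt_order 2 (fun a => X a * Y a) := filt_orderM (ltn0Sn 0) (ltn0Sn 0) X1 Y1.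
have W1 : filt_order 1 W := filt_orderD (filt_orderD X1 Y1) (filt_order_le (leqnSn 1) XY2).
have LW2 : filt_order 2 (fun a => - L (- W a)).
  exact/filt_orderN/(filt_order_comp L2)/filt_orderN.
apply: (@eq_in_filt_order _ (fun a => E (g a) + E (h a) + X a * Y a - L (- W a))).
  move=> a Fa; have F1 f : filt_order 1 f -> F 1 (f a).
    by move=> [fF _]; rewrite -[1%N]muln1; apply: fF.
  have Fg := F1 _ g1; have Fh := F1 _ h1; have FW := F1 _ W1.
  rewrite /fC !fexpE //.
  have -> : (1 + g a + E (g a)) * (1 + h a + E (h a)) = 1 + W a.
    rewrite -!addrA; change ((1 + X a) * (1 + Y a) = 1 + W a); rewrite /W.
    move: (X a) (Y a) => x y.
    by rewrite mulrDl !mulrDr !mul1r mulr1 -addrA (addrA y) [y + x]addrC.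
  rewrite flogE // [RHS]addrAC; congr (_ - _).
  by rewrite /W /X /Y addrACA -(addrA (g a + h a)) [RHS]addrC addKr.
exact: filt_orderD (filt_orderD (filt_orderD Eg2 Eh2) XY2) LW2.
Qed.

Section QuadraticPerturbation.

Variable f : A -> A.
Hypothesis f_id2 : filt_order 2 (fun a => f a - a).

Lemma perturb_filt1 a : F 1 a -> F 1 (f a).
Proof.
move=> Fa; rewrite -(subrK a (f a)); apply: (filt_add HF) => //.
exact: filt_le (filt_order_hom f_id2 (ltn0Sn 0) Fa).
Qed.

Lemma perturb_inj a b : F 1 a -> F 1 b -> f a = f b -> a = b.
Proof.
move=> Fa Fb fab; apply: filt_eq; elim=> [|n IH]; first exact: (filt_top HF).
have := filt_order_sub f_id2 Fa Fb IH.
by rewrite fab subrACA subrr sub0r addn1 => /filt_opp; rewrite opprK.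
Qed.

Lemma perturb_surj c : F 1 c -> exists2 a, F 1 a & f a = c.
Proof.
move=> Fc; pose g a := f a - a; pose x n := iter n (fun y => c - g y) c.
have Fg y : F 1 y -> F 1 (g y).
  by move=> Fy; apply: filt_le (filt_order_hom f_id2 (ltn0Sn 0) Fy).
have Fx n : F 1 (x n) by elim: n => [|n IH] //=; apply/filt_sub/Fg.
have Fstep n : F n (x n.+1 - x n).
  elim: n => [|n IH]; first exact: (filt_top HF).
  rewrite [x n.+2]/= [x n.+1]/= subrACA subrr sub0r; apply: filt_opp.
  by have := filt_order_sub f_id2 (Fx _) (Fx _) IH; rewrite addn1.
have [l Fl] := filt_complete HF Fstep.
have Fl1 : F 1 l by rewrite -(subrK (x 1%N) l); apply: (filt_add HF).
exists l => //; apply: filt_eq => n.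
have -> : f l - c = (l - x n.+1) + (g l - g (x n)).
  by rewrite [x n.+1]/= opprB addrACA subrKC addrAC subrr add0r.
apply: (filt_add HF); first exact: filt_le (Fl n.+1).
by apply: filt_le (filt_order_sub f_id2 Fl1 (Fx n) (Fl n)); rewrite addn1.
Qed.

Definition perturb_inv b := epsilon (inhabits b) (fun a => F 1 a /\ f a = b).

Lemma perturb_invP b : F 1 b -> F 1 (perturb_inv b) /\ f (perturb_inv b) = b.
Proof.
move=> Fb; apply: (epsilon_spec (inhabits b) (fun a => F 1 a /\ f a = b)).
by have [a Fa fab] := perturb_surj Fb; exists a.
Qed.

Lemma perturb_invK a : F 1 a -> perturb_inv (f a) = a.
Proof.
move=> Fa; have [Finv finv] := perturb_invP (perturb_filt1 Fa).
exact: perturb_inj.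
Qed.

Lemma perturb_inv_sub i b : (0 < i)%N -> F i b -> F (2 * i) (perturb_inv b - b).
Proof.
move=> i0 Fb; have [Fa fab] := perturb_invP (filt_le i0 Fb).
move: (perturb_inv b) Fa fab => a Fa1 fab.
have Fa m : (0 < m <= i)%N -> F m a.
  elim: m => [//|[_ _ //|m] IH] /andP[_ mi].
  have -> : a = b - (f a - a) by rewrite fab subKr.
  apply: filt_sub; first exact: filt_le Fb.
  have Fam : F m.+1 a by apply: IH; rewrite ltn0Sn ltnW.
  by apply: filt_le (filt_order_hom f_id2 (ltn0Sn m) Fam); lia.
by rewrite -fab -opprB; apply/filt_opp/(filt_order_hom f_id2 i0)/Fa; rewrite i0 leqnn.
Qed.

End QuadraticPerturbation.

End CompleteFiltration.

Theorem proposition2p1 (K : fieldType) (A : algType K) (F : nat -> A -> Prop)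
  (P : {linear A -> A}) :
  [pchar K] =i pred0 ->
  complete_filtration F ->
  (forall n a, F n a -> F n (P a)) ->
  exists chi : A -> A,
    ((forall a, F 1%N a -> F 1%N (chi a)) /\
     (forall i a, (1 <= i)%N -> F i a -> F (2 * i)%N (chi a - a)) /\
     (forall a, F 1%N a -> a = fC F (P (chi a)) (chi a - P (chi a)))) /\
    (forall chi' : A -> A,
       (forall a, F 1%N a -> F 1%N (chi' a)) ->
       (forall i a, (1 <= i)%N -> F i a -> F (2 * i)%N (chi' a - a)) ->
       (forall a, F 1%N a -> a = fC F (P (chi' a)) (chi' a - P (chi' a))) ->
       forall a, F 1%N a -> chi' a = chi a) /\
    (forall a b, F 1%N a -> F 1%N b -> chi a = chi b -> a = b) /\
    (forall b, F 1%N b -> exists2 a, F 1%N a & chi a = b) /\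
    (forall a, F 1%N a ->
       F 1%N (fC F (P a) (a - P a)) /\ chi (fC F (P a) (a - P a)) = a).
Proof.
move=> _ HF PF; pose Phi a := fC F (P a) (a - P a).
have P1 : filt_order F 1 P := filt_order_additive PF.
have P'1 : filt_order F 1 (fun a => a - P a) :=
  filt_orderD HF (filt_order_id F) (filt_orderN HF P1).
have Phi_id2 : filt_order F 2 (fun a => Phi a - a).
  apply: (eq_in_filt_order HF _ (filt_order_bch HF P1 P'1)).
  by move=> a _; rewrite subrKC.
pose chi := perturb_inv F Phi.
have invP b : F 1%N b -> F 1%N (chi b) /\ Phi (chi b) = b by exact: perturb_invP.
have Phi1 := perturb_filt1 HF Phi_id2.
have chiK := perturb_invK HF Phi_id2.
exists chi; split; [split; [|split] | split; [|split; [|split]]].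
- by move=> a /invP[].
- move=> i a; exact: perturb_inv_sub.
- by move=> a /invP[_ /esym].
- move=> chi' chi'1 _ chi'E a Fa; have [Finv Phi_inv] := invP a Fa.
  apply: (perturb_inj HF Phi_id2 (chi'1 _ Fa) Finv).
  by rewrite Phi_inv; apply/esym/chi'E.
- by move=> a b /invP[_ Ea] /invP[_ Eb] chiab; rewrite -Ea -Eb chiab.
- by move=> b Fb; exists (Phi b); [exact: Phi1 | exact: chiK].
- by move=> a Fa; split; [exact: Phi1 | exact: chiK].
Qed.
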